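(* Let $k$ be a field, $e,h \geq 1$ integers, $1 \leq i \leq e$, and $M$ a finite-dimensional $k[T]/T^e$-module generated by at most $h$ elements. Assume $N \subseteq M$ is a $k[T]$-submodule with $T^i N = 0$ and $T^{e-i} M \subseteq N$. Regard $N$ as a $k[T]/T^i$-module and $M/N$ as a $k[T]/T^{e-i}$-module. Then $\mathrm{Hdg}(M) \geq \mathrm{Hdg}(N) \star \mathrm{Hdg}(M/N)$, i.e. $\mathrm{Hdg}(M)(x) \geq \mathrm{Hdg}(N) \star \mathrm{Hdg}(M/N)(x)$ for all $0 \le x \le h$.
   Context: For a $k[T]/T^m$-module $Q$ generated by at most $h$ elements, write $Q \simeq \bigoplus_{j=1}^h k[T]/T^{a_j}$ with $0 \leq a_j \leq m$; its Hodge polygon $\mathrm{Hdg}(Q)$ is the convex polygon on $[0,h]$ starting at the origin with slopes $\frac{a_1}{m}, \dots, \frac{a_h}{m}$ (each on an interval of length $1$, in increasing order); it lies in $\mathcal{P}_m$, the set of convex polygons on $[0,h]$ starting at the origin with integral breakpoint $x$-coordinates and slopes in $\frac1m\mathbb{Z}\cap[0,1]$. For $P_1 \in \mathcal{P}_{N_1}$ and $P_2 \in \mathcal{P}_{N_2}$, $P_1 \star P_2 \in \mathcal{P}_{N_1+N_2}$ is defined by $(P_1 \star P_2)(x) = \frac{1}{N_1+N_2}(N_1 P_1(x) + N_2 P_2(x))$. *)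

From HB Require Import structures.
From mathcomp Require Import all_boot all_order all_algebra.
Set Implicit Arguments. Unset Strict Implicit. Unset Printing Implicit Defensive.
Import Order.TTheory GRing.Theory Num.Theory.
Local Open Scope ring_scope.

(* A finite-dimensional k[T]-module is modelled as the row space 'rV[F]_n with
   T acting by right multiplication by a matrix A : 'M[F]_n.  Submodules are
   A-stable subspaces, represented by matrices (row spaces, mxalgebra %MS). *)

Section Defs.
Variables (F : fieldType) (n : nat).

Definition Tpow (A : 'M[F]_n) (l : nat) : 'M[F]_n := iter l (mulmx^~ A) 1%:M.

(* M (= the whole space) is generated, as a k[T]-module, by at most h
   elements: there are h vectors whose k[T]-span (spanned by the T^l g_j,
   l < e suffices since T^e = 0) is everything. *)
Definition gen_by_at_most (A : 'M[F]_n) (e h : nat) : Prop :=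
  exists g : 'I_h -> 'rV[F]_n,
    (\sum_(j < h) \sum_(l < e) <<g j *m Tpow A l>> == 1%:M)%MS.

(* The subquotient V/W (W <= V both T-stable) is isomorphic, as a
   k[T]/T^m-module, to (+)_{j<h} k[T]/T^(a_j) with 0 <= a_j <= m :
   there are v_j in V with T^(a_j) v_j in W (the map is well defined),
   the images span V/W (surjective) and the dimension count matches
   (injective). *)
Definition is_decomp (A : 'M[F]_n) (V W : 'M[F]_n) (m h : nat) (a : seq nat)
  : Prop :=
  [/\ size a = h, all (fun x => x <= m)%N a &
    exists v : 'I_h -> 'rV[F]_n,
      [/\ forall j, (v j <= V)%MS,
          forall j, (v j *m Tpow A (nth 0%N a j) <= W)%MS,
          (V == W + \sum_(j < h) \sum_(l < nth 0%N a j) <<v j *m Tpow A l>>)%MS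
        & \rank V = (\rank W + \sum_(j < h) nth 0%N a j)%N]].
End Defs.

(* The Hodge polygon with slopes a_j/m (sorted increasingly), on [0, size a],
   starting at the origin:  Hdg(x) = sum_j (a_(j)/m) * |[j, j+1] /\ [0, x]|. *)
Definition clamp01 (R : realFieldType) (t : R) : R := Num.min 1 (Num.max 0 t).

Definition hdg (R : realFieldType) (m : nat) (a : seq nat) (x : R) : R :=
  let s := sort leq a in
  \sum_(j < size s) ((nth 0%N s j)%:R / m%:R) * clamp01 (x - j%:R).

Definition pstar (R : realFieldType) (N1 : nat) (P1 : R -> R)
  (N2 : nat) (P2 : R -> R) (x : R) : R :=
  (N1%:R * P1 x + N2%:R * P2 x) / (N1 + N2)%:R.

(* Let [a], [b], [c] be the elementary divisors of [M], [N] and [M/N], and [top_r] the sum of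
   the [r] largest parts of a partition.  Since [dim M = dim N + dim (M/N)], Abel summation
   against the nonincreasing weights [clamp01 (x - j)] reduces the inequality of polygons to
   [top_r a <= top_r b + top_r c] for every [r].  Let [S] be the submodule generated by [r]
   generators of [M] carrying the [r] largest parts of [a], so that [dim S = top_r a] and
   [dim S = dim (S :&: N) + dim ((S + N)/N)].  Both pieces have a socle of dimension at most [r]:
   the first lies in [S], the second is a quotient of [S], and a module generated by [r]
   elements has a socle of dimension at most [r].  [T^l] embeds the layer [ker T^(l+1) / ker T^l]
   of a [k[T]]-module into its socle, so each layer of the two pieces has dimension at most [r];
   it is also at most the same layer of [N], resp. [M/N], whose dimension is the [l]-th column
   of the Young diagram of [b], resp. [c].  Summing [min (r, column)] over the columns gives
   [top_r b], resp. [top_r c]. *)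

From HB Require Import structures.
From mathcomp Require Import all_boot all_order all_algebra.
From mathcomp Require Import zify ring.
Import Order.TTheory GRing.Theory Num.Theory.

Set Implicit Arguments. Unset Strict Implicit. Unset Printing Implicit Defensive.
Local Open Scope ring_scope.
Local Open Scope nat_scope.

Section SortedSums.

Definition low_sum (k : nat) (s : seq nat) : nat := sumn (take k (sort leq s)).
Definition top_sum (r : nat) (s : seq nat) : nat := sumn (drop (size s - r) (sort leq s)).

Lemma sumn_low_top k s : k <= size s -> sumn s = low_sum k s + top_sum (size s - k) s.
Proof.
move=> le_ks; rewrite /low_sum /top_sum subKn // -sumn_cat cat_take_drop.
by apply: perm_sumn; rewrite perm_sym perm_sort.
Qed.

Lemma sum_nth_sort k s : k <= size s -> \sum_(j < k) nth 0 (sort leq s) j = low_sum k s.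
Proof.
move=> le_k; rewrite /low_sum sumnE (big_nth 0) size_takel ?size_sort // big_mkord.
by apply: eq_bigr => j _; rewrite nth_take.
Qed.

Lemma sum_ord_ltn L x : \sum_(l < L) (l < x) = minn x L.
Proof.
elim: L => [|L IH]; first by rewrite big_ord0 minn0.
by rewrite big_ord_recr /= IH; case: ltnP; lia.
Qed.

Lemma sum_ord_count_ltn L s : all (fun x => x <= L) s ->
  \sum_(l < L) count (fun x => l < x) s = sumn s.
Proof.
elim: s => [|x s IH] /=; first by rewrite big1.
by case/andP=> le_xL /IH IHs; rewrite big_split /= IHs sum_ord_ltn; lia.
Qed.

(* Column [l] of the Young diagram of [s] has [count (l < .) s] boxes; capping every
   column at [r] boxes keeps the [r] largest rows. *)
Lemma sum_minn_count_top L r s : all (fun x => x <= L) s -> r <= size s ->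
  \sum_(l < L) minn r (count (fun x => l < x) s) = top_sum r s.
Proof.
move=> s_le le_r; set t := sort leq s; set k := size s - r.
have perm_ts : perm_eq t s by rewrite perm_sort.
have size_top : size (drop k t) = r by rewrite size_drop size_sort /k; lia.
have top_le : all (fun x => x <= L) (drop k t).
  by apply/allP=> x /mem_drop; rewrite (perm_mem perm_ts) => /(allP s_le).
rewrite /top_sum -/t -/k -(sum_ord_count_ltn top_le); apply: eq_bigr => l _.
rewrite -(permP perm_ts) -[in LHS](cat_take_drop k t) count_cat.
have [/hasP[y y_low lt_ly] | /hasPn no_low] := boolP (has (fun x => l < x) (take k t)).
  have : all (fun x => l < x) (drop k t).
    have := sort_sorted leq_total s; rewrite -/t (sorted_pairwise leq_trans).
    rewrite -{1}(cat_take_drop k t) pairwise_cat => /and3P[/allrelP low_le_top _ _].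
    by apply/allP=> z z_top; exact: leq_trans lt_ly (low_le_top y z y_low z_top).
  by rewrite all_count => /eqP ->; rewrite size_top; lia.
rewrite (eq_in_count (a2 := pred0)); last by move=> x /no_low /negbTE.
by rewrite count_pred0 add0n; apply/minn_idPr; rewrite -size_top count_size.
Qed.

Lemma sum_ord_mem_seq h (D : seq nat) (f : nat -> nat) :
  uniq D -> all (fun j => j < h) D -> \sum_(j < h | val j \in D) f j = \sum_(j <- D) f j.
Proof.
move=> uniq_D D_lt; rewrite -(big_mkord (fun j => j \in D)) -big_filter.
apply/perm_big/uniq_perm => [||j]; rewrite ?filter_uniq ?iota_uniq //.
by rewrite mem_filter mem_index_iota andb_idr // => /(allP D_lt).
Qed.

Lemma top_sum_exists_indices h r s : size s = h -> r <= h ->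
  exists P : pred 'I_h, #|P| = r /\ \sum_(j < h | P j) nth 0 s j = top_sum r s.
Proof.
move=> <- le_r; have /(perm_iotaP 0)[I perm_I sort_sE] : perm_eq (sort leq s) s.
  by rewrite perm_sort.
set D := drop (size s - r) I.
have uniq_D : uniq D by rewrite drop_uniq // (perm_uniq perm_I) iota_uniq.
have D_lt : all (fun j => j < size s) D.
  by apply/allP=> j /mem_drop; rewrite (perm_mem perm_I) mem_iota.
exists (fun j : 'I_(size s) => val j \in D); split.
  rewrite -sum1_card (sum_ord_mem_seq (fun _ => 1) uniq_D D_lt) sum1_size.
  by rewrite size_drop (perm_size perm_I) size_iota subKn.
by rewrite (sum_ord_mem_seq _ uniq_D D_lt) /top_sum sort_sE -map_drop sumnE big_map.
Qed.

End SortedSums.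

Section Rank.
Variables (F : fieldType) (n : nat).

Lemma mxrank_sum_le (I : Type) (r : seq I) (P : pred I) (B : I -> 'M[F]_n) :
  \rank (\sum_(i <- r | P i) B i)%MS <= \sum_(i <- r | P i) \rank (B i).
Proof.
apply: (big_ind2 (fun (M : 'M_n) k => \rank M <= k)) => [|M1 k1 M2 k2 le1 le2|//].
  by rewrite mxrank0.
by apply: leq_trans (mxrank_adds_leqif _ _) _; apply: leq_add.
Qed.

Lemma mxrank_mul_coker m (Y : 'M[F]_(m, n)) (W : 'M[F]_n) :
  \rank (Y *m cokermx W) + \rank W = \rank (Y + W)%MS.
Proof.
rewrite -(mxrank_mul_ker (Y + W)%MS (cokermx W)); congr (_ + _).
  by rewrite addsmxMr mulmx_coker addsmx0.
apply/esym/eqmx_rank/andP; split; first by rewrite submxE -sub_kermx capmxSr.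
by rewrite sub_capmx addsmxSr sub_kermx mulmx_coker eqxx.
Qed.

Lemma stablemx_cap m1 m2 (V : 'M[F]_(m1, n)) (W : 'M[F]_(m2, n)) f :
  stablemx V f -> stablemx W f -> stablemx (V :&: W)%MS f.
Proof.
move=> sV sW; rewrite sub_capmx.
by rewrite (submx_trans (submxMr _ (capmxSl _ _)) sV) (submx_trans (submxMr _ (capmxSr _ _)) sW).
Qed.

End Rank.

Section Filtration.
Variables (F : fieldType) (n : nat) (A : 'M[F]_n).
Local Notation T := (Tpow A).

Lemma TpowS l : T l.+1 = T l *m A. Proof. by []. Qed.

Lemma Tpow1 : T 1 = A. Proof. exact: mul1mx. Qed.

Lemma TpowD l1 l2 : T (l1 + l2) = T l1 *m T l2.
Proof.
elim: l2 => [|l2 IH]; first by rewrite addn0 mulmx1.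
by rewrite addnS /= IH mulmxA.
Qed.

Lemma stablemx_Tpow m (X : 'M[F]_(m, n)) l : stablemx X A -> stablemx X (T l).
Proof.
by move=> sX; elim: l => [|l IH]; [exact: stablemxC | exact: stablemxM].
Qed.

Definition Tpreim (W : 'M[F]_n) l : 'M[F]_n := kermx (T l *m cokermx W).

Lemma sub_Tpreim m (v : 'M[F]_(m, n)) W l : (v <= Tpreim W l)%MS = (v *m T l <= W)%MS.
Proof. by rewrite sub_kermx mulmxA submxE. Qed.

Lemma Tpreim_succ W l : stablemx W A -> (Tpreim W l <= Tpreim W l.+1)%MS.
Proof.
move=> sW; rewrite sub_Tpreim /= mulmxA; apply: submx_trans (submxMr A _) sW.
by rewrite -sub_Tpreim.
Qed.

Lemma mxrank_cap_Tpreim m (V : 'M[F]_(m, n)) W l :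
  \rank (V :&: Tpreim W l)%MS + \rank (V *m T l + W)%MS = \rank V + \rank W.
Proof.
by rewrite -mxrank_mul_coker -mulmxA -(mxrank_mul_ker V (T l *m cokermx W)) /Tpreim; lia.
Qed.

Lemma mxrank_cap_Tpreim0 (Z W : 'M[F]_n) : (W <= Z)%MS -> \rank (Z :&: Tpreim W 0)%MS = \rank W.
Proof.
move=> sWZ; have := mxrank_cap_Tpreim Z W 0; rewrite mulmx1 (addsmx_idPl sWZ).1.
lia.
Qed.

(* The dimension of the layer [ker T^(l+1) / ker T^l] of [Z/W]. *)
Definition Tjump (Z W : 'M[F]_n) l : nat :=
  \rank (Z :&: Tpreim W l.+1)%MS - \rank (Z :&: Tpreim W l)%MS.

Section StableQuotient.
Variable W : 'M[F]_n.
Hypothesis sW : stablemx W A.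

Lemma mxrank_cap_Tpreim_succ (Z : 'M[F]_n) l :
  \rank (Z :&: Tpreim W l)%MS <= \rank (Z :&: Tpreim W l.+1)%MS.
Proof. by apply/mxrankS/capmxS => //; exact: Tpreim_succ. Qed.

Lemma mxrank_cap_Tpreim_telescope (Z : 'M[F]_n) L :
  \rank (Z :&: Tpreim W L)%MS = \rank (Z :&: Tpreim W 0)%MS + \sum_(l < L) Tjump Z W l.
Proof.
elim: L => [|L IH]; first by rewrite big_ord0 addn0.
by rewrite big_ord_recr /= addnA -IH /Tjump subnKC // mxrank_cap_Tpreim_succ.
Qed.

(* [T^l] embeds the [l]-th layer of [Z/W] into its socle. *)
Lemma Tjump_le_Tjump0 (Z : 'M[F]_n) l : stablemx Z A -> (W <= Z)%MS ->
  Tjump Z W l <= Tjump Z W 0.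
Proof.
move=> sZ sWZ; set X := (Z :&: Tpreim W l.+1)%MS.
have capX : \rank (X :&: Tpreim W l)%MS = \rank (Z :&: Tpreim W l)%MS.
  apply/eqmx_rank/andP; split; first by rewrite capmxS ?capmxSl.
  rewrite sub_capmx capmxSr andbT capmxS //; exact: Tpreim_succ.
have XT_socle : (X *m T l <= Z :&: Tpreim W 1)%MS.
  rewrite sub_capmx (submx_trans (submxMr _ (capmxSl _ _)) (stablemx_Tpow _ sZ)).
  by rewrite sub_Tpreim -mulmxA -TpowD addn1 -sub_Tpreim capmxSr.
have sW_socle : (W <= Z :&: Tpreim W 1)%MS by rewrite sub_capmx sWZ sub_Tpreim Tpow1.
have := mxrank_mul_ker X (T l *m cokermx W); rewrite -/(Tpreim W l) capX mulmxA.
have := mxrankS (submxMr (cokermx W) XT_socle).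
have := mxrank_mul_coker (Z :&: Tpreim W 1)%MS W.
rewrite (addsmx_idPl sW_socle).1 /Tjump mxrank_cap_Tpreim0 // /X; lia.
Qed.

Lemma Tjump_monotone (Z V : 'M[F]_n) l : (Z <= V)%MS -> Tjump Z W l <= Tjump V W l.
Proof.
move=> sZV; have := mxrank_sum_cap (Z :&: Tpreim W l.+1)%MS (V :&: Tpreim W l)%MS.
have : \rank (Z :&: Tpreim W l.+1 + V :&: Tpreim W l)%MS <= \rank (V :&: Tpreim W l.+1)%MS.
  by apply: mxrankS; rewrite addsmx_sub !capmxS ?Tpreim_succ.
have : \rank (Z :&: Tpreim W l.+1 :&: (V :&: Tpreim W l))%MS <= \rank (Z :&: Tpreim W l)%MS.
  by apply/mxrankS/capmxS; [exact: capmxSl | exact: capmxSr].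
have := mxrank_cap_Tpreim_succ Z l; have := mxrank_cap_Tpreim_succ V l.
rewrite /Tjump; lia.
Qed.

End StableQuotient.

(* By rank-nullity for [T], the socle of [Z/W] and its top [Z/(T Z + W)] have equal dimensions. *)
Lemma Tjump0_le (Z W G : 'M[F]_n) : (W <= Z)%MS -> (Z <= Z *m A + W + G)%MS ->
  Tjump Z W 0 <= \rank G.
Proof.
move=> sWZ sZ; have := mxrank_cap_Tpreim Z W 1; rewrite Tpow1.
have := leq_trans (mxrankS sZ) (mxrank_adds_leqif _ _).
rewrite /Tjump mxrank_cap_Tpreim0 //; lia.
Qed.

End Filtration.

Section Decomposition.
Variables (F : fieldType) (n : nat) (A : 'M[F]_n).
Local Notation T := (Tpow A).

Definition Tspan h (P : pred 'I_h) (v : 'I_h -> 'rV[F]_n) (lo hi : 'I_h -> nat) : 'M[F]_n :=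
  (\sum_(j < h | P j) \sum_(lo j <= k < hi j) <<v j *m T k>>)%MS.

Section Span.
Variables (h : nat) (v : 'I_h -> 'rV[F]_n).

Lemma sub_Tspan (P : pred 'I_h) lo hi j k :
  P j -> lo j <= k < hi j -> (v j *m T k <= Tspan P v lo hi)%MS.
Proof.
move=> Pj k_in; apply: (sumsmx_sup j) => //.
rewrite (bigD1_seq k) ?mem_index_iota ?iota_uniq //=.
by apply: submx_trans (addsmxSl _ _); rewrite genmxE.
Qed.

Lemma Tspan_sub (P : pred 'I_h) lo hi m (Y : 'M[F]_(m, n)) :
  (forall j k, P j -> lo j <= k < hi j -> (v j *m T k <= Y)%MS) -> (Tspan P v lo hi <= Y)%MS.
Proof.
move=> sY; apply/sumsmx_subP => j Pj; rewrite big_nat_cond.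
apply: (big_ind (fun M : 'M_n => M <= Y)%MS) => [|M1 M2|k /andP[k_in _]].
- exact: sub0mx.
- by rewrite addsmx_sub => -> ->.
- by rewrite genmxE sY.
Qed.

Lemma mxrank_Tspan (P : pred 'I_h) lo hi :
  \rank (Tspan P v lo hi) <= \sum_(j < h | P j) (hi j - lo j).
Proof.
apply: leq_trans (mxrank_sum_le _ _ _) _; apply: leq_sum => j _.
apply: leq_trans (mxrank_sum_le _ _ _) _.
rewrite -[hi j - lo j]muln1 -sum_nat_const_nat; apply: leq_sum => k _.
by rewrite mxrank_gen rank_leq_row.
Qed.

Lemma stablemx_Tspan (P : pred 'I_h) hi : (forall j, P j -> v j *m T (hi j) = 0%R) ->
  stablemx (Tspan P v (fun=> 0) hi) A.
Proof.
move=> v_hi; rewrite -[X in (_ *m X <= _)%MS]Tpow1 -sub_Tpreim.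
apply: Tspan_sub => j k Pj /andP[_ lt_k].
rewrite sub_Tpreim Tpow1 -mulmxA -TpowS.
have [lt_k1 | le_hi] := ltnP k.+1 (hi j); first exact: sub_Tspan.
have -> : k.+1 = hi j by apply/anti_leq/andP.
by rewrite v_hi // sub0mx.
Qed.

Lemma Tspan_sub_gen (P : pred 'I_h) hi :
  (Tspan P v (fun=> 0) hi <= Tspan P v (fun=> 0) hi *m A + Tspan P v (fun=> 0) (fun=> 1))%MS.
Proof.
apply: Tspan_sub => j [|k] Pj /andP[_ lt_k].
  by apply: submx_trans (addsmxSr _ _); exact: sub_Tspan.
rewrite TpowS mulmxA; apply: submx_trans (addsmxSl _ _).
by apply: submxMr; apply: sub_Tspan => //; exact: ltnW.
Qed.

Lemma mxrank_Tspan_ge (P : pred 'I_h) hi : (1%:M <= Tspan xpredT v (fun=> 0) hi)%MS ->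
  \sum_(j < h) hi j = n -> \sum_(j < h | P j) hi j <= \rank (Tspan P v (fun=> 0) hi).
Proof.
move=> full sum_hi.
have split_P : (1%:M <= Tspan P v (fun=> 0) hi + Tspan (predC P) v (fun=> 0) hi)%MS.
  apply: submx_trans full _; apply: Tspan_sub => j k _ k_in.
  case Pj: (P j); [apply: submx_trans (addsmxSl _ _) | apply: submx_trans (addsmxSr _ _)];
    by apply: sub_Tspan; rewrite //= Pj.
have := leq_trans (mxrankS split_P) (mxrank_adds_leqif _ _).
have := mxrank_Tspan (predC P) (fun=> 0) hi.
rewrite (bigID P) /= in sum_hi; rewrite /= mxrank1; under [X in _ <= X]eq_bigr do rewrite subn0.
lia.
Qed.

End Span.

Lemma is_decomp_Tspan V W m h a : is_decomp A V W m h a ->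
  [/\ size a = h, all (fun x => x <= m) a & exists v : 'I_h -> 'rV[F]_n,
    [/\ forall j, (v j <= V)%MS, forall j, (v j *m T (nth 0 a j) <= W)%MS,
        (V <= W + Tspan xpredT v (fun=> 0) (nth 0 a))%MS
      & \rank V = \rank W + sumn a]].
Proof.
case=> size_a a_le [v [vV vW /andP[sVC _] rankV]]; split=> //; exists v; split=> //.
  by rewrite /Tspan; under eq_bigr do rewrite big_mkord.
by rewrite rankV sumnE (big_nth 0) size_a big_mkord.
Qed.

Lemma mxrank_mulTpow_decomp V W m h a l : stablemx V A -> stablemx W A ->
  is_decomp A V W m h a -> \rank (V *m T l + W)%MS = \rank W + \sum_(x <- a) (x - l).
Proof.
move=> sV sW /is_decomp_Tspan[size_a _ [v [vV vW sVC rankV]]].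
have sum_nth f : \sum_(j < h) f (nth 0 a j) = \sum_(x <- a) f x.
  by rewrite (big_nth 0) size_a big_mkord.
have upper : (V *m T l + W <= W + Tspan xpredT v (fun=> l) (nth 0 a))%MS.
  rewrite addsmx_sub addsmxSl andbT -sub_Tpreim; apply: submx_trans sVC _.
  rewrite addsmx_sub sub_Tpreim (submx_trans (stablemx_Tpow _ sW) (addsmxSl _ _)) /=.
  apply: Tspan_sub => j k _ /andP[_ lt_k]; rewrite sub_Tpreim -mulmxA -TpowD.
  have [lt_kl | le_kl] := ltnP (k + l) (nth 0 a j).
    by apply: submx_trans (addsmxSr _ _); apply: sub_Tspan; rewrite // leq_addl.
  rewrite -(subnKC le_kl) TpowD mulmxA; apply: submx_trans (addsmxSl _ _).
  exact: submx_trans (submxMr _ (vW j)) (stablemx_Tpow _ sW).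
have lower : (V <= V *m T l + W + Tspan xpredT v (fun=> 0) (fun j => minn l (nth 0 a j)))%MS.
  apply: submx_trans sVC _; rewrite addsmx_sub (submx_trans (addsmxSr _ W) (addsmxSl _ _)) /=.
  apply: Tspan_sub => j k _ /andP[_ lt_k].
  have [lt_kl | le_lk] := ltnP k l.
    by apply: submx_trans (addsmxSr _ _); apply: sub_Tspan; rewrite // leq_min lt_kl.
  rewrite -(subnK le_lk) TpowD mulmxA; apply: submx_trans (addsmxSl _ _).
  apply: submx_trans (addsmxSl _ _); apply: submxMr.
  exact: submx_trans (submxMr _ (vV j)) (stablemx_Tpow _ sV).
have rank_D : \rank (Tspan xpredT v (fun=> l) (nth 0 a)) <= \sum_(x <- a) (x - l).
  by rewrite -sum_nth; exact: mxrank_Tspan.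
have rank_E : \rank (Tspan xpredT v (fun=> 0) (fun j => minn l (nth 0 a j)))
    <= \sum_(x <- a) minn l x.
  by rewrite -sum_nth; apply: leq_trans (mxrank_Tspan _ _ _ _) _; under eq_bigr do rewrite subn0.
have split_a : sumn a = \sum_(x <- a) minn l x + \sum_(x <- a) (x - l).
  by rewrite sumnE -big_split; apply: eq_bigr => x _ /=; lia.
have := leq_trans (mxrankS upper) (mxrank_adds_leqif _ _).
have := leq_trans (mxrankS lower) (mxrank_adds_leqif _ _).
rewrite rankV split_a; lia.
Qed.

Lemma Tjump_decomp V W m h a l : stablemx V A -> stablemx W A ->
  is_decomp A V W m h a -> Tjump A V W l = count (fun x => l < x) a.
Proof.
move=> sV sW decV; have := mxrank_cap_Tpreim A V W l; have := mxrank_cap_Tpreim A V W l.+1.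
rewrite !(mxrank_mulTpow_decomp _ sV sW decV).
have : \sum_(x <- a) (x - l) = \sum_(x <- a) (x - l.+1) + count (fun x => l < x) a.
  rewrite -sum1_count [X in _ + X]big_mkcond -big_split.
  by apply: eq_bigr => x _ /=; case: ltnP; lia.
rewrite /Tjump; lia.
Qed.

(* Each layer of [Z/W] is at most its socle, hence at most [r], and at most the same layer
   of [V/W], which is a column of the Young diagram of [a]. *)
Lemma mxrank_le_top_sum Z V W m h a L r : Tpow A L = 0%R -> m <= L -> r <= h ->
  stablemx V A -> stablemx W A -> stablemx Z A -> (W <= Z)%MS -> (Z <= V)%MS ->
  is_decomp A V W m h a -> Tjump A Z W 0 <= r -> \rank Z <= \rank W + top_sum r a.
Proof.
move=> TL0 le_mL le_rh sV sW sZ sWZ sZV decV jump0_le.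
have [size_a a_le _] := decV.
have Z_Tpreim : (Z <= Tpreim A W L)%MS by rewrite sub_Tpreim TL0 mulmx0 sub0mx.
rewrite -(capmx_idPl Z_Tpreim).1 mxrank_cap_Tpreim_telescope // mxrank_cap_Tpreim0 //.
rewrite leq_add2l -(@sum_minn_count_top L) ?size_a //; last first.
  by apply/allP=> x /(allP a_le) /leq_trans; apply.
apply: leq_sum => l _; rewrite leq_min (leq_trans (Tjump_le_Tjump0 sW l sZ sWZ)) //=.
by rewrite -(Tjump_decomp _ sV sW decV) Tjump_monotone.
Qed.

Lemma top_sum_decomp_le e i h U a b c r : Tpow A e = 0%R -> i <= e -> r <= h -> stablemx U A ->
  is_decomp A 1%:M 0%R e h a -> is_decomp A U 0%R i h b -> is_decomp A 1%:M U (e - i) h c ->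
  top_sum r a <= top_sum r b + top_sum r c.
Proof.
move=> Te le_ie le_rh sU deca decb decc.
have [size_a _ [v [_ vW sVC rank1]]] := is_decomp_Tspan deca.
have [P [card_P sum_P]] := top_sum_exists_indices size_a le_rh.
set S := Tspan P v (fun=> 0) (nth 0 a); set G := Tspan P v (fun=> 0) (fun=> 1).
have sS : stablemx S A by apply: stablemx_Tspan => j _; apply/eqP; rewrite -submx0 vW.
have rank_G : \rank G <= r.
  by rewrite -card_P -sum1_card; exact: mxrank_Tspan.
have S_gen : (S <= S *m A + (0%R : 'M_n) + G)%MS.
  exact: submx_trans (Tspan_sub_gen v P _) (addsmxS (addsmxSl _ _) (submx_refl G)).
have top_le_S : top_sum r a <= \rank S.
  rewrite -sum_P; apply: mxrank_Tspan_ge; first by move: sVC; rewrite adds0mx_id.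
  by move: rank1; rewrite mxrank1 mxrank0 sumnE (big_nth 0) size_a big_mkord.
have jump_cap : Tjump A (S :&: U)%MS 0%R 0 <= r.
  apply: leq_trans (Tjump_monotone (stable0mx _ _) _ (capmxSl S U)) _.
  exact: leq_trans (Tjump0_le (sub0mx _ _) S_gen) rank_G.
have jump_sum : Tjump A (S + U)%MS U 0 <= r.
  apply: leq_trans (Tjump0_le (addsmxSr _ _) _) rank_G.
  rewrite addsmx_sub (submx_trans (addsmxSr _ U) (addsmxSl _ _)) andbT.
  apply: submx_trans S_gen (addsmxS (addsmxS _ (sub0mx _ _)) (submx_refl G)).
  exact: submxMr (addsmxSl _ _).
have rank_cap := mxrank_le_top_sum Te le_ie le_rh sU (stable0mx _ _) (stablemx_cap sS sU)
  (sub0mx _ _) (capmxSr _ _) decb jump_cap.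
have rank_sum := mxrank_le_top_sum Te (leq_subr i e) le_rh (submx1 _) sU (stableDmx sS sU)
  (addsmxSr _ _) (submx1 _) decc jump_sum.
have := mxrank_sum_cap S U; move: rank_cap; rewrite mxrank0; lia.
Qed.

Lemma low_sum_decomp_le e i h U a b c k : Tpow A e = 0%R -> i <= e -> k <= h -> stablemx U A ->
  is_decomp A 1%:M 0%R e h a -> is_decomp A U 0%R i h b -> is_decomp A 1%:M U (e - i) h c ->
  low_sum k b + low_sum k c <= low_sum k a.
Proof.
move=> Te le_ie le_kh sU deca decb decc.
have [size_a _ [_ [_ _ _ rank_a]]] := is_decomp_Tspan deca.
have [size_b _ [_ [_ _ _ rank_b]]] := is_decomp_Tspan decb.
have [size_c _ [_ [_ _ _ rank_c]]] := is_decomp_Tspan decc.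
have := top_sum_decomp_le Te le_ie (leq_subr k h) sU deca decb decc.
move: rank_a rank_b rank_c; rewrite !(sumn_low_top (k := k)) ?size_a ?size_b ?size_c //.
by rewrite mxrank1 mxrank0; lia.
Qed.

End Decomposition.

Section HodgePolygon.
Local Open Scope ring_scope.
Variable R : realFieldType.

Lemma clamp01_ge0 (t : R) : 0 <= clamp01 t.
Proof. by rewrite /clamp01 le_min ler01 le_max lexx. Qed.

Lemma clamp01_le (s t : R) : s <= t -> clamp01 s <= clamp01 t.
Proof. by move=> le_st; rewrite /clamp01 le_min2 // le_max2. Qed.

Lemma hdg_scaled m s (x : R) : all (fun y => y <= m)%N s ->
  m%:R * hdg m s x = \sum_(j < size s) (nth 0%N (sort leq s) j)%:R * clamp01 (x - j%:R).
Proof.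
move=> s_le; rewrite /hdg mulr_sumr size_sort; apply: eq_bigr => j _.
have : (nth 0%N (sort leq s) j <= m)%N.
  by apply/(allP s_le); rewrite -(mem_sort leq) mem_nth ?size_sort.
have [-> | m_neq0] := eqVneq m 0%N; first by rewrite leqn0 => /eqP->; rewrite !mul0r.
by rewrite mulrA mulrCA divff ?mulr1 // pnatr_eq0.
Qed.

Lemma ler_sum_nonincr_weights h (u v w : nat -> R) :
  (forall k, (k <= h)%N -> \sum_(j < k) u j <= \sum_(j < k) v j) ->
  (forall j, w j.+1 <= w j) -> 0 <= w h ->
  \sum_(j < h) u j * w j <= \sum_(j < h) v j * w j.
Proof.
move=> le_uv w_nonincr w_h_ge0; rewrite -subr_ge0 -sumrB.
set D := fun k => \sum_(j < k) (v j - u j).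
have D_ge0 k : (k <= h)%N -> 0 <= D k by move=> /le_uv; rewrite /D sumrB subr_ge0.
have abel k : \sum_(j < k) (v j * w j - u j * w j)
    = \sum_(j < k) D j.+1 * (w j - w j.+1) + D k * w k.
  elim: k => [|k IH]; first by rewrite /D !big_ord0 mul0r addr0.
  by rewrite !big_ord_recr /= IH /D big_ord_recr /=; ring.
rewrite abel addr_ge0 ?mulr_ge0 ?D_ge0 // sumr_ge0 // => j _.
by rewrite mulr_ge0 ?D_ge0 ?subr_ge0.
Qed.

Lemma pstar_hdg_le i j m a b c (x : R) : (0 < m)%N -> (i + j)%N = m ->
  all (fun y => y <= m)%N a -> all (fun y => y <= i)%N b -> all (fun y => y <= j)%N c ->
  size b = size a -> size c = size a ->
  (forall k, (k <= size a)%N -> (low_sum k b + low_sum k c <= low_sum k a)%N) ->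
  pstar i (hdg i b) j (hdg j c) x <= hdg m a x.
Proof.
move=> m_gt0 ij_m a_le b_le c_le size_b size_c low_le.
rewrite /pstar ij_m ler_pdivrMr ?ltr0n // (mulrC (hdg m a x)) !hdg_scaled // size_b size_c.
rewrite -big_split /=; under eq_bigr do rewrite -mulrDl.
pose w k := clamp01 (x - k%:R); pose part s k : R := (nth 0%N (sort leq s) k)%:R.
apply: (ler_sum_nonincr_weights (u := fun k => part b k + part c k) (v := part a) (w := w)).
- move=> k le_k; rewrite big_split /= -!natr_sum -natrD ler_nat.
  by rewrite !sum_nth_sort ?size_b ?size_c ?low_le.
- by move=> k; apply: clamp01_le; rewrite lerB // ler_nat.
- exact: clamp01_ge0.
Qed.

End HodgePolygon.

Unset Implicit Arguments.
Local Open Scope ring_scope.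

Theorem mainTheorem6 (F : fieldType) (R : realFieldType) (e h i n : nat)
  (A U : 'M[F]_n) (a b c : seq nat) :
  (1 <= e)%N -> (1 <= h)%N -> (1 <= i)%N -> (i <= e)%N ->
  Tpow A e = 0 ->
  gen_by_at_most A e h ->
  (U *m A <= U)%MS ->
  U *m Tpow A i = 0 ->
  (Tpow A (e - i) <= U)%MS ->
  is_decomp A 1%:M 0 e h a ->
  is_decomp A U 0 i h b ->
  is_decomp A 1%:M U (e - i) h c ->
  forall x : R, 0 <= x -> x <= h%:R ->
    pstar i (hdg i b) (e - i) (hdg (e - i) c) x <= hdg e a x.
Proof.
move=> e_gt0 _ _ le_ie Te _ sU _ _ deca decb decc x _ _.
have [size_a a_le _] := deca; have [size_b b_le _] := decb; have [size_c c_le _] := decc.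
apply: pstar_hdg_le; rewrite ?subnKC ?size_a ?size_b ?size_c // => k le_kh.
exact: low_sum_decomp_le Te le_ie le_kh sU deca decb decc.
Qed.
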